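(* Let $p\ge 2$, $0<T\le\infty$. (Direct part.) Let $(a_i(t))_{i\ge0}$, $t\in[0,T)$, be a solution of $$\dot a_i=a_i\Big(\prod_{j=1}^{p}a_{i+j}-\prod_{j=1}^{p}a_{i-j}\Big),\quad i\in\mathbb Z_+,\ a_l=0\ (l<0),$$ with $a_i(t)\neq 0$ and $(a_i(t))_i\in l_\infty$, and set $b_i(t)=a_i(t)a_{i+1}(t)\cdots a_{i+p-1}(t)$ (the Miura map; $(b_i)$ then solves $\dot b_i=b_i(\sum_{j=1}^p b_{i+j}-\sum_{j=1}^p b_{i-j})$, $b_l=0$ for $l<0$). Let $S^l_k(t)=(L1(t)^k)_{l-1,0}$ and $\tilde S^l_k(t)=(L2(t)^k)_{0,l-1}$, $l=1,\dots,p$, $k\ge 0$, be the moments of the matrices $L1(t)$ built from $(a_i(t))$ and $L2(t)$ built from $(b_i(t))$. Then $$\frac{S^l_k(t)}{S^l_{l-1}(t)}=\tilde S^l_k(t),\qquad l=1,\dots,p,\ k\in\mathbb Z_+.$$ (Converse part.) Let $(b_i(t))_{i\ge0}$, $t\in[0,T)$, be a solution of $\dot b_i=b_i(\sum_{j=1}^p b_{i+j}-\sum_{j=1}^p b_{i-j})$, $b_l=0$ for $l<0$, with $b_i(t)\ne 0$, $(b_i(t))_i\in l_\infty$. Choose nonzero $a_0(0),\dots,a_{p-2}(0)\in\mathbb C$ and define $a_i(t)=a_i(0)\exp\big(\int_0^t b_{i+1}(\tau)d\tau\big)$ for $i=0,\dots,p-2$ and recursively $a_i(t)=b_{i-p+1}(t)/(a_{i-p+1}(t)\cdots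 a_{i-1}(t))$ for $i\ge p-1$. Then, with $S^l_k(t)$ the moments of $L1(t)$ built from these $a_i(t)$ and $\tilde S^l_k(t)$ those of $L2(t)$ built from $b_i(t)$, one has for all $k\in\mathbb Z_+$ $$S^1_k(t)=\tilde S^1_k(t),\qquad S^l_k(t)=a_0(0)\cdots a_{l-2}(0)\,\exp\Big(\int_0^t\big(\tilde S^l_{l+p}(\tau)-\tilde S^1_{p+1}(\tau)\big)d\tau\Big)\tilde S^l_k(t),\quad l=2,\dots,p,$$ and $S(t)=(S^1_k(t),\dots,S^p_k(t))_k$ is the moment sequence of the matrix $L1(t)$ associated with a solution of the first ($a$-)system.
   Context: For a sequence $(a_i)$, $L1$ is the infinite matrix (indices $\ge0$) with $(L1)_{i,i+p}=1$, $(L1)_{i+1,i}=a_i$ for $i\ge0$, other entries zero. For $(b_i)$, $L2$ is the infinite matrix with $(L2)_{i,i+1}=1$, $(L2)_{i+p,i}=b_i$ for $i\ge 0$, other entries zero. Matrix powers are ordinary products of these banded matrices. *)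

From Stdlib Require Import Reals.
From Coquelicot Require Import Coquelicot.
Open Scope R_scope.

Definition cexp (z : C) : C :=
  (exp (Re z) * cos (Im z), exp (Re z) * sin (Im z)).

Definition CRInt (f : R -> C) (a b : R) : C :=
  (RInt (fun s => Re (f s)) a b, RInt (fun s => Im (f s)) a b).

Fixpoint cprod (n : nat) (f : nat -> C) : C :=
  match n with
  | O => RtoC 1
  | S n => Cmult (cprod n f) (f n)
  end.

Definition inI (T : Rbar) (t : R) : Prop := 0 <= t /\ Rbar_lt t T.

(* f has derivative l at t relative to the interval [0,T)
   (two-sided in the interior, right derivative at t = 0) *)
Definition deriv_in (T : Rbar) (f : R -> C) (t : R) (l : C) : Prop :=
  filterlim (fun s => Cdiv (Cminus (f s) (f t)) (RtoC (s - t)))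
    (within (fun s => inI T s /\ s <> t) (locally t)) (locally l).

(* value a_{i-j} with the convention a_l = 0 for l < 0 *)
Definition back (x : nat -> C) (i j : nat) : C :=
  if (j <=? i)%nat then x (i - j)%nat else RtoC 0.

Definition rhsA (p : nat) (x : nat -> C) (i : nat) : C :=
  Cmult (x i) (Cminus (cprod p (fun j => x (i + S j)%nat))
                      (cprod p (fun j => back x i (S j)))).

Definition rhsB (p : nat) (y : nat -> C) (i : nat) : C :=
  Cmult (y i) (Cminus (sum_n (fun j => y (i + S j)%nat) (p - 1))
                      (sum_n (fun j => back y i (S j)) (p - 1))).

Definition solA (p : nat) (T : Rbar) (a : nat -> R -> C) : Prop :=
  forall i t, inI T t -> deriv_in T (a i) t (rhsA p (fun n => a n t) i).

Definition solB (p : nat) (T : Rbar) (b : nat -> R -> C) : Prop :=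
  forall i t, inI T t -> deriv_in T (b i) t (rhsB p (fun n => b n t) i).

Definition bounded_seq (x : nat -> C) : Prop :=
  exists M : R, forall i, Cmod (x i) <= M.

Definition miura (p : nat) (a : nat -> R -> C) (i : nat) (t : R) : C :=
  cprod p (fun j => a (i + j)%nat t).

Definition L1 (p : nat) (x : nat -> C) (i j : nat) : C :=
  if (j =? i + p)%nat then RtoC 1
  else if (i =? j + 1)%nat then x j else RtoC 0.

Definition L2 (p : nat) (y : nat -> C) (i j : nat) : C :=
  if (j =? i + 1)%nat then RtoC 1
  else if (i =? j + p)%nat then y j else RtoC 0.

(* Powers of an infinite matrix L whose column j is supported in rows
   0..j+p (true for L1 and L2); the sum is then the ordinary
   matrix product (L^(k+1))_{i,j} = sum_m (L^k)_{i,m} L_{m,j}. *)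
Fixpoint mpow (p : nat) (L : nat -> nat -> C) (k i j : nat) : C :=
  match k with
  | O => if (i =? j)%nat then RtoC 1 else RtoC 0
  | S k => sum_n (fun m => Cmult (mpow p L k i m) (L m j)) (j + p)%nat
  end.

Definition S1 (p : nat) (x : nat -> C) (l k : nat) : C :=
  mpow p (L1 p x) k (l - 1)%nat 0%nat.
Definition S2 (p : nat) (y : nat -> C) (l k : nat) : C :=
  mpow p (L2 p y) k 0%nat (l - 1)%nat.

(** With P_j = a_0 ⋯ a_{j-1}, the Miura relation b_j = a_j ⋯ a_{j+p-1} says that
    conjugating L2 by diag(P) gives the transpose of L1: P_j (L2)_{m,j} = P_m (L1)_{j,m}.
    Hence P_j (L2^k)_{i,j} = P_i (L1^k)_{j,i}; for i = 0, j = l-1 this is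
    S^l_k = P_{l-1} ~S^l_k, and ~S^l_{l-1} = (L2^{l-1})_{0,l-1} = 1.

    For the converse, the a_i are nonzero and satisfy the Miura relation by construction.
    Their logarithmic derivatives are b_{i+1} - b_{i-p}: for i <= p-2 by the fundamental
    theorem of calculus, and for i >= p-1 by strong induction, since
    a_i = b_{i-p+1} / (a_{i-p+1} ⋯ a_{i-1}) and the b-system gives the logarithmic
    derivative of b_{i-p+1}. This is exactly the a-system. Finally
    P_{l-1} = c_0 ⋯ c_{l-2} exp ∫ (b_1 + ⋯ + b_{l-1}), and
    b_1 + ⋯ + b_{l-1} = ~S^l_{l+p} - ~S^1_{p+1} because (L2^{j+p+1})_{0,j} = b_0 + ⋯ + b_j. *)

From Stdlib Require Import Reals Lia Lra.
From Coquelicot Require Import Coquelicot.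
Open Scope R_scope.
Open Scope C_scope.

Fixpoint csum (n : nat) (f : nat -> C) : C :=
  match n with
  | O => 0
  | S n => csum n f + f n
  end.

Lemma sum_n_csum (f : nat -> C) n : sum_n f n = csum (S n) f.
Proof.
  induction n as [|n IH].
  - rewrite sum_O. simpl. ring.
  - rewrite sum_Sn, IH. reflexivity.
Qed.

Lemma csum_ext n (f g : nat -> C) :
  (forall m, (m < n)%nat -> f m = g m) -> csum n f = csum n g.
Proof. induction n; intros H; simpl; [|rewrite IHn, H]; auto. Qed.

Lemma csum_single n m0 (f : nat -> C) : (forall m, m <> m0 -> f m = 0) ->
  csum n f = if (m0 <? n)%nat then f m0 else 0.
Proof.
  intros Hf. induction n as [|n IH]; simpl; [now destruct m0|].
  rewrite IH. destruct (Nat.eq_dec n m0) as [->|Hn].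
  - rewrite Nat.ltb_irrefl, (proj2 (Nat.ltb_lt _ _)) by lia. ring.
  - rewrite (Hf n) by auto.
    replace (m0 <? S n)%nat with (m0 <? n)%nat
      by (destruct (Nat.ltb_spec m0 n), (Nat.ltb_spec m0 (S n)); auto; lia).
    ring.
Qed.

Lemma csum_plus n (f g : nat -> C) : csum n (fun m => f m + g m) = csum n f + csum n g.
Proof. induction n; simpl; [|rewrite IHn]; ring. Qed.

Lemma csum_minus n (f g : nat -> C) : csum n (fun m => f m - g m) = csum n f - csum n g.
Proof. induction n; simpl; [|rewrite IHn]; ring. Qed.

Lemma csum_mult_l n c (f : nat -> C) : csum n (fun m => c * f m) = c * csum n f.
Proof. induction n; simpl; [|rewrite IHn]; ring. Qed.

Lemma csum_mult_r n c (f : nat -> C) : csum n (fun m => f m * c) = csum n f * c.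
Proof. induction n; simpl; [|rewrite IHn]; ring. Qed.

Lemma csum_swap n m (f : nat -> nat -> C) :
  csum n (fun i => csum m (fun j => f i j)) = csum m (fun j => csum n (fun i => f i j)).
Proof.
  induction n; simpl.
  - induction m; simpl; [|rewrite <- IHm]; ring.
  - rewrite IHn, <- csum_plus. reflexivity.
Qed.

Lemma csum_succ_l n (f : nat -> C) : csum (S n) f = f 0%nat + csum n (fun m => f (S m)).
Proof. induction n; simpl in *; [|rewrite IHn]; ring. Qed.

Lemma csum_rev n (f : nat -> C) : csum n (fun m => f (n - 1 - m)%nat) = csum n f.
Proof.
  revert f; induction n as [|n IH]; intros f; auto.
  rewrite csum_succ_l. simpl csum at 2.
  rewrite <- (IH f), Nat.sub_0_r, Nat.sub_succ, Nat.sub_0_r.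
  rewrite (csum_ext n _ (fun m => f (n - 1 - m)%nat)) by (intros; f_equal; lia).
  ring.
Qed.

Lemma cprod_ext n (f g : nat -> C) :
  (forall m, (m < n)%nat -> f m = g m) -> cprod n f = cprod n g.
Proof. induction n; intros H; simpl; [|rewrite IHn, H]; auto. Qed.

Lemma cprod_add j n (f : nat -> C) :
  cprod (j + n) f = cprod j f * cprod n (fun m => f (j + m)%nat).
Proof. induction n; simpl; [rewrite Nat.add_0_r | rewrite Nat.add_succ_r; simpl; rewrite IHn]; ring. Qed.

Lemma cprod_succ_l n (f : nat -> C) : cprod (S n) f = f 0%nat * cprod n (fun m => f (S m)).
Proof. induction n; simpl in *; [|rewrite IHn]; ring. Qed.

Lemma cprod_rev n (f : nat -> C) : cprod n (fun m => f (n - 1 - m)%nat) = cprod n f.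
Proof.
  revert f; induction n as [|n IH]; intros f; auto.
  rewrite cprod_succ_l. simpl cprod at 2.
  rewrite <- (IH f), Nat.sub_0_r, Nat.sub_succ, Nat.sub_0_r.
  rewrite (cprod_ext n _ (fun m => f (n - 1 - m)%nat)) by (intros; f_equal; lia).
  ring.
Qed.

Lemma cprod_neq0 n (f : nat -> C) : (forall m, (m < n)%nat -> f m <> 0) -> cprod n f <> 0.
Proof.
  induction n; intros H; simpl.
  - exact C1_nz.
  - apply Cmult_neq_0; auto.
Qed.

Lemma cprod_eq0 n m (f : nat -> C) : (m < n)%nat -> f m = 0 -> cprod n f = 0.
Proof.
  intros Hm Hf. replace n with (m + S (n - S m))%nat by lia.
  rewrite cprod_add, cprod_succ_l, Nat.add_0_r, Hf. ring.
Qed.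

Lemma Cinv_neq0 (z : C) : z <> 0 -> / z <> 0.
Proof. intros Hz E. apply C1_nz. rewrite <- (Cinv_r z Hz), E. ring. Qed.

Lemma mpow_succ_r p L k i j :
  mpow p L (S k) i j = csum (S (j + p)) (fun m => mpow p L k i m * L m j).
Proof. apply sum_n_csum. Qed.

Section BandMatrix.
Variables (p : nat) (L : nat -> nat -> C).
Hypothesis L_col : forall m j, (j + p < m)%nat -> L m j = 0.
Hypothesis L_row : forall i m, (i + p < m)%nat -> L i m = 0.

Lemma mpow_1 i j : mpow p L 1 i j = L i j.
Proof.
  rewrite mpow_succ_r, (csum_single _ i).
  - simpl. rewrite Nat.eqb_refl. destruct (Nat.ltb_spec i (S (j + p))).
    + ring.
    + rewrite L_col by lia. reflexivity.
  - intros m Hm. simpl. rewrite (proj2 (Nat.eqb_neq i m)) by auto. ring.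
Qed.

Lemma mpow_succ_l k i j :
  mpow p L (S k) i j = csum (S (i + p)) (fun n => L i n * mpow p L k n j).
Proof.
  revert i j; induction k as [|k IH]; intros i j.
  - rewrite mpow_1, (csum_single _ j).
    + simpl. rewrite Nat.eqb_refl. destruct (Nat.ltb_spec j (S (i + p))).
      * ring.
      * rewrite L_row by lia. reflexivity.
    + intros n Hn. simpl. rewrite (proj2 (Nat.eqb_neq n j)) by auto. ring.
  - rewrite mpow_succ_r.
    rewrite (csum_ext _ _ (fun m => csum (S (i + p)) (fun n => L i n * (mpow p L k n m * L m j))))
      by (intros m _; rewrite IH, <- csum_mult_r; apply csum_ext; intros; ring).
    rewrite csum_swap. apply csum_ext. intros n _.
    rewrite mpow_succ_r, csum_mult_l. reflexivity.
Qed.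
End BandMatrix.

Section L2Powers.
Variables (p : nat) (y : nat -> C).

Lemma mpow_L2_succ k i j : mpow p (L2 p y) (S k) i j =
  match j with O => 0 | S j' => mpow p (L2 p y) k i j' end + mpow p (L2 p y) k i (j + p) * y j.
Proof.
  rewrite mpow_succ_r.
  rewrite (csum_ext _ _ (fun m => mpow p (L2 p y) k i m * (if (j =? m + 1)%nat then 1 else 0)
                              + mpow p (L2 p y) k i m * (if (m =? j + p)%nat then y j else 0))).
  2:{ intros m _. unfold L2.
      destruct (Nat.eqb_spec j (m + 1)), (Nat.eqb_spec m (j + p)); try lia; ring. }
  rewrite csum_plus. f_equal.
  - destruct j as [|j].
    + rewrite (csum_single _ 0); [now rewrite Cmult_0_r|].
      intros m _. rewrite (proj2 (Nat.eqb_neq 0 (m + 1))) by lia. ring.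
    + rewrite (csum_single _ j).
      * rewrite (proj2 (Nat.eqb_eq (S j) (j + 1))), (proj2 (Nat.ltb_lt _ _)) by lia. ring.
      * intros m Hm. rewrite (proj2 (Nat.eqb_neq (S j) (m + 1))) by lia. ring.
  - rewrite (csum_single _ (j + p)).
    + rewrite Nat.eqb_refl, (proj2 (Nat.ltb_lt _ _)) by lia. reflexivity.
    + intros m Hm. rewrite (proj2 (Nat.eqb_neq m (j + p))) by auto. ring.
Qed.

Lemma mpow_L2_above k j : (k < j)%nat -> mpow p (L2 p y) k 0 j = 0.
Proof.
  revert j; induction k as [|k IH]; intros j H.
  - destruct j; [lia | reflexivity].
  - rewrite mpow_L2_succ. destruct j as [|j]; [lia|].
    rewrite !IH by lia. ring.
Qed.

Lemma mpow_L2_diag k : mpow p (L2 p y) k 0 k = 1.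
Proof.
  induction k as [|k IH]; [reflexivity|].
  rewrite mpow_L2_succ, IH, mpow_L2_above by lia. ring.
Qed.

Lemma mpow_L2_partial_sum j : mpow p (L2 p y) (S (j + p)) 0 j = csum (S j) y.
Proof.
  induction j as [|j IH]; rewrite mpow_L2_succ, mpow_L2_diag.
  - simpl. ring.
  - rewrite Nat.add_succ_l, IH. simpl. ring.
Qed.
End L2Powers.

Section MiuraConjugation.
Variables (p : nat) (x y : nat -> C).
Hypothesis p_pos : (1 <= p)%nat.
Hypothesis y_miura : forall j, y j = cprod p (fun r => x (j + r)%nat).

Lemma L1_col m j : (j + p < m)%nat -> L1 p x m j = 0.
Proof. intros H. unfold L1. destruct (Nat.eqb_spec j (m + p)), (Nat.eqb_spec m (j + 1)); auto; lia. Qed.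

Lemma L1_row i m : (i + p < m)%nat -> L1 p x i m = 0.
Proof. intros H. unfold L1. destruct (Nat.eqb_spec m (i + p)), (Nat.eqb_spec i (m + 1)); auto; lia. Qed.

Lemma L2_conj m j : cprod j x * L2 p y m j = cprod m x * L1 p x j m.
Proof.
  unfold L1, L2.
  destruct (Nat.eqb_spec j (m + 1)) as [Hj|], (Nat.eqb_spec m (j + p)) as [Hm|]; try lia.
  - rewrite Hj, Nat.add_1_r. simpl. ring.
  - rewrite Hm, y_miura, cprod_add. ring.
  - ring.
Qed.

Lemma mpow_L2_conj k i j :
  cprod j x * mpow p (L2 p y) k i j = cprod i x * mpow p (L1 p x) k j i.
Proof.
  revert i j; induction k as [|k IH]; intros i j.
  - simpl. destruct (Nat.eqb_spec i j), (Nat.eqb_spec j i); subst; try lia; ring.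
  - rewrite mpow_succ_r, (mpow_succ_l p (L1 p x) L1_col L1_row), <- !csum_mult_l.
    apply csum_ext. intros m _.
    transitivity (mpow p (L2 p y) k i m * (cprod j x * L2 p y m j)); [ring|].
    rewrite L2_conj.
    transitivity ((cprod m x * mpow p (L2 p y) k i m) * L1 p x j m); [ring|].
    rewrite IH. ring.
Qed.

Lemma S1_eq_cprod_S2 l k : S1 p x l k = cprod (l - 1) x * S2 p y l k.
Proof. unfold S1, S2. rewrite mpow_L2_conj. simpl. ring. Qed.
End MiuraConjugation.

Lemma S2_diag p y l : S2 p y l (l - 1) = 1.
Proof. apply mpow_L2_diag. Qed.

Lemma S1_ratio p (x : nat -> C) l k : (1 <= p)%nat -> (forall m, x m <> 0) ->
  S1 p x l k / S1 p x l (l - 1) = S2 p (fun j => cprod p (fun r => x (j + r)%nat)) l k.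
Proof.
  intros Hp Hx. rewrite !(S1_eq_cprod_S2 p x _ Hp (fun j => eq_refl)), S2_diag.
  field. apply cprod_neq0. auto.
Qed.

Close Scope C_scope.

Section Limits.
Context {U : Type} {F : (U -> Prop) -> Prop} {FF : Filter F}.

Lemma lim_Rplus (f g : U -> R) a b : filterlim f F (locally a) -> filterlim g F (locally b) ->
  filterlim (fun s => f s + g s) F (locally (a + b)).
Proof. intros. eapply filterlim_comp_2; eauto. apply (filterlim_plus (V := R_NormedModule)). Qed.

Lemma lim_Rmult (f g : U -> R) a b : filterlim f F (locally a) -> filterlim g F (locally b) ->
  filterlim (fun s => f s * g s) F (locally (a * b)).
Proof. intros. eapply filterlim_comp_2; eauto. apply (filterlim_mult (K := R_AbsRing)). Qed.

Lemma lim_Ropp (f : U -> R) a : filterlim f F (locally a) -> filterlim (fun s => - f s) F (locally (- a)).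
Proof. intros. eapply filterlim_comp; eauto. apply (filterlim_opp (V := R_NormedModule)). Qed.

Lemma lim_Rinv (f : U -> R) a : a <> 0 -> filterlim f F (locally a) ->
  filterlim (fun s => / f s) F (locally (/ a)).
Proof.
  intros Ha Hf. eapply filterlim_comp; [exact Hf|].
  apply continuity_pt_filterlim, continuity_pt_inv; [apply continuity_pt_id | exact Ha].
Qed.

Lemma lim_Re (f : U -> C) a : filterlim f F (locally a) ->
  filterlim (fun s => Re (f s)) F (locally (Re a)).
Proof.
  intros Hf. apply filterlim_locally. intros eps.
  generalize (proj1 (filterlim_locally f a) Hf eps). apply filter_imp. now intros s [H _].
Qed.

Lemma lim_Im (f : U -> C) a : filterlim f F (locally a) ->
  filterlim (fun s => Im (f s)) F (locally (Im a)).
Proof.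
  intros Hf. apply filterlim_locally. intros eps.
  generalize (proj1 (filterlim_locally f a) Hf eps). apply filter_imp. now intros s [_ H].
Qed.

Lemma lim_of_Re_Im (f : U -> C) a :
  filterlim (fun s => Re (f s)) F (locally (Re a)) ->
  filterlim (fun s => Im (f s)) F (locally (Im a)) -> filterlim f F (locally a).
Proof.
  intros H1 H2. apply filterlim_locally. intros eps.
  generalize (filter_and _ _ (proj1 (filterlim_locally _ _) H1 eps) (proj1 (filterlim_locally _ _) H2 eps)).
  apply filter_imp. now intros s [A B].
Qed.

Local Open Scope C_scope.

Lemma lim_Cplus (f g : U -> C) a b : filterlim f F (locally a) -> filterlim g F (locally b) ->
  filterlim (fun s => f s + g s) F (locally (a + b)).
Proof. intros. eapply filterlim_comp_2; eauto. apply (filterlim_plus (V := C_NormedModule)). Qed.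

Lemma lim_Copp (f : U -> C) a : filterlim f F (locally a) -> filterlim (fun s => - f s) F (locally (- a)).
Proof. intros. eapply filterlim_comp; eauto. apply (filterlim_opp (V := C_NormedModule)). Qed.

Lemma lim_Cmult (f g : U -> C) a b : filterlim f F (locally a) -> filterlim g F (locally b) ->
  filterlim (fun s => f s * g s) F (locally (a * b)).
Proof.
  intros Hf Hg P HP. apply locally_C in HP. revert P HP.
  apply (filterlim_comp_2 (G := locally (T := AbsRing_UniformSpace C_AbsRing) a)
           (H := locally (T := AbsRing_UniformSpace C_AbsRing) b)).
  - intros Q HQ. apply Hf, locally_C, HQ.
  - intros Q HQ. apply Hg, locally_C, HQ.
  - apply (filterlim_mult (K := C_AbsRing)).
Qed.

Lemma lim_Cinv (f : U -> C) (a : C) : a <> 0 -> filterlim f F (locally a) ->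
  filterlim (fun s => / f s) F (locally (/ a)).
Proof.
  intros Ha Hf.
  assert (Hn : (Re a ^ 2 + Im a ^ 2)%R <> 0%R).
  { rewrite <- Cmod2_alt. intro E. apply Ha, Cmod_eq_0. nra. }
  pose proof (lim_Re f a Hf). pose proof (lim_Im f a Hf).
  apply lim_of_Re_Im; simpl;
    repeat first [ assumption | apply lim_Rmult | apply lim_Rplus | apply lim_Ropp
                 | apply lim_Rinv | apply filterlim_const ].
Qed.
End Limits.

Definition near_in (T : Rbar) (t : R) : (R -> Prop) -> Prop :=
  within (fun s => inI T s /\ s <> t) (locally t).

Global Instance near_in_filter T t : Filter (near_in T t).
Proof. apply within_filter, locally_filter. Qed.

Lemma near_in_inI T t : near_in T t (inI T).
Proof. unfold near_in, within. apply filter_forall. now intros s [H _]. Qed.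

Lemma near_in_neq T t : near_in T t (fun s => s <> t).
Proof. unfold near_in, within. apply filter_forall. now intros s [_ H]. Qed.

Lemma near_in_sub_neq0 T t : near_in T t (fun s => RtoC (s - t) <> RtoC 0).
Proof.
  generalize (near_in_neq T t). apply filter_imp.
  intros s Hs E. apply Hs, Rminus_diag_uniq, RtoC_inj, E.
Qed.

Lemma near_in_diff_quot T (u : R -> R) t d : derivable_pt_lim u t d ->
  filterlim (fun s => (u s - u t) / (s - t)) (near_in T t) (locally d).
Proof.
  intros Hu. apply filterlim_locally. intros eps.
  destruct (Hu eps (cond_pos eps)) as [delta Hd]. exists delta. intros s Hs [_ Hst].
  specialize (Hd (s - t) ltac:(lra) Hs). rewrite Rplus_minus in Hd. exact Hd.
Qed.

Lemma lim_RtoC_sub T t : filterlim (fun s => RtoC (s - t)) (near_in T t) (locally (RtoC 0)).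
Proof.
  apply lim_of_Re_Im; simpl.
  - rewrite <- (Rminus_diag t). apply lim_Rplus; [|apply filterlim_const].
    apply (filterlim_filter_le_1 _ (filter_le_within (F := locally t) _)), filterlim_id.
  - apply filterlim_const.
Qed.

Section DerivativeRules.
Local Open Scope C_scope.
Variable T : Rbar.

Lemma deriv_in_continuous (f : R -> C) t l : deriv_in T f t l -> filterlim f (near_in T t) (locally (f t)).
Proof.
  intros H.
  apply (filterlim_ext_loc (fun s => f t + (f s - f t) / RtoC (s - t) * RtoC (s - t))).
  - generalize (near_in_sub_neq0 T t). apply filter_imp. intros s Hs. field. exact Hs.
  - assert (L := lim_Cplus _ _ _ _ (filterlim_const (f t)) (lim_Cmult _ _ _ _ H (lim_RtoC_sub T t))).
    now rewrite Cmult_0_r, Cplus_0_r in L.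
Qed.

Lemma deriv_in_ext (f g : R -> C) t l : (forall s, inI T s -> f s = g s) -> inI T t ->
  deriv_in T f t l -> deriv_in T g t l.
Proof.
  intros Hfg Ht H. eapply filterlim_ext_loc; [|exact H].
  generalize (near_in_inI T t). apply filter_imp. intros s Hs. now rewrite !Hfg.
Qed.

Lemma deriv_in_const (c : C) t : deriv_in T (fun _ => c) t 0.
Proof.
  eapply filterlim_ext_loc; [|apply filterlim_const].
  generalize (near_in_sub_neq0 T t). apply filter_imp. intros s Hs. field. exact Hs.
Qed.

Lemma deriv_in_mult (f g : R -> C) t l1 l2 : deriv_in T f t l1 -> deriv_in T g t l2 ->
  deriv_in T (fun s => f s * g s) t (l1 * g t + f t * l2).
Proof.
  intros Hf Hg.
  apply (filterlim_ext_loc (fun s => (f s - f t) / RtoC (s - t) * g s + f t * ((g s - g t) / RtoC (s - t)))).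
  - generalize (near_in_sub_neq0 T t). apply filter_imp. intros s Hs. field. exact Hs.
  - apply lim_Cplus; apply lim_Cmult;
      [exact Hf | exact (deriv_in_continuous _ _ _ Hg) | apply filterlim_const | exact Hg].
Qed.

Lemma deriv_in_inv (g : R -> C) t l : (forall s, inI T s -> g s <> 0) -> inI T t -> deriv_in T g t l ->
  deriv_in T (fun s => / g s) t (- (l / (g t * g t))).
Proof.
  intros Hg Ht H.
  apply (filterlim_ext_loc (fun s => - ((g s - g t) / RtoC (s - t) * / (g s * g t)))).
  - generalize (filter_and _ _ (near_in_sub_neq0 T t) (near_in_inI T t)). apply filter_imp.
    intros s [Hs Hi]. field. repeat split; auto.
  - apply lim_Copp, lim_Cmult; [exact H|].
    apply lim_Cinv; [apply Cmult_neq_0; apply Hg, Ht|].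
    apply lim_Cmult; [exact (deriv_in_continuous _ _ _ H) | apply filterlim_const].
Qed.

Lemma deriv_in_of_real (u v : R -> R) t du dv :
  derivable_pt_lim u t du -> derivable_pt_lim v t dv ->
  deriv_in T (fun s => (u s, v s)) t (du, dv).
Proof.
  intros Hu Hv. apply lim_of_Re_Im; simpl;
    [ eapply filterlim_ext_loc; [|exact (near_in_diff_quot T u t du Hu)]
    | eapply filterlim_ext_loc; [|exact (near_in_diff_quot T v t dv Hv)] ];
    generalize (near_in_neq T t); apply filter_imp; intros s Hs;
    unfold Cdiv, Cminus, Cmult, Cinv, Cplus, Copp, RtoC; simpl; field; lra.
Qed.

Lemma deriv_in_cexp (u v : R -> R) t du dv :
  derivable_pt_lim u t du -> derivable_pt_lim v t dv ->
  deriv_in T (fun s => cexp (u s, v s)) t (cexp (u t, v t) * (du, dv)).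
Proof.
  intros Hu Hv.
  assert (He := derivable_pt_lim_comp _ _ _ _ _ Hu (derivable_pt_lim_exp (u t))).
  assert (Hc := derivable_pt_lim_comp _ _ _ _ _ Hv (derivable_pt_lim_cos (v t))).
  assert (Hs := derivable_pt_lim_comp _ _ _ _ _ Hv (derivable_pt_lim_sin (v t))).
  assert (Hre := derivable_pt_lim_mult _ _ _ _ _ He Hc).
  assert (Him := derivable_pt_lim_mult _ _ _ _ _ He Hs).
  unfold mult_fct, comp in Hre, Him.
  replace (cexp (u t, v t) * (du, dv)) with
    ((exp (u t) * du * cos (v t) + exp (u t) * (- sin (v t) * dv))%R,
     (exp (u t) * du * sin (v t) + exp (u t) * (cos (v t) * dv))%R).
  - exact (deriv_in_of_real _ _ t _ _ Hre Him).
  - unfold cexp, Cmult; simpl. f_equal; ring.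
Qed.
End DerivativeRules.

Definition continuous_in {V : UniformSpace} (T : Rbar) (f : R -> V) : Prop :=
  forall t, inI T t -> filterlim f (near_in T t) (locally (f t)).

Lemma continuous_Rmax0 z : continuous (Rmax 0) z.
Proof.
  apply filterlim_locally. intros eps. exists eps. intros s Hs.
  change (Rabs (s - z) < eps) in Hs. change (Rabs (Rmax 0 s - Rmax 0 z) < eps).
  apply Rabs_def2 in Hs. apply Rabs_def1; unfold Rmax;
    destruct (Rle_dec 0 s), (Rle_dec 0 z); lra.
Qed.

Lemma Rbar_lt_Rmax0 (T : Rbar) (s : R) : Rbar_lt 0 T -> Rbar_lt s T -> Rbar_lt (Rmax 0 s) T.
Proof. intros H0 Hs. now apply (Rmax_case 0 s (fun x => Rbar_lt x T)). Qed.

(* Coquelicot's fundamental theorem of calculus needs two-sided continuity at t, also at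
   t = 0, so h is extended to the left of 0 by the constant h 0. *)
Section IntegralOnInterval.
Variables (T : Rbar) (h : R -> R).
Hypothesis h_cont : continuous_in T h.

Lemma continuous_clamp (z : R) : Rbar_lt 0 T -> Rbar_lt z T -> continuous (fun s => h (Rmax 0 s)) z.
Proof.
  intros HT Hz P HP.
  assert (Hh : locally (Rmax 0 z) (fun s => inI T s -> P (h s))).
  { assert (Hz0 : inI T (Rmax 0 z)) by (split; [apply Rmax_l | now apply Rbar_lt_Rmax0]).
    assert (W := h_cont _ Hz0 P HP). unfold filtermap, near_in, within in W.
    revert W. apply filter_imp. intros s Hs Is.
    destruct (Req_dec s (Rmax 0 z)) as [->|Hne].
    - exact (locally_singleton _ _ HP).
    - exact (Hs (conj Is Hne)). }
  assert (Hm : locally z (fun s => inI T (Rmax 0 s) -> P (h (Rmax 0 s))))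
    by exact (continuous_Rmax0 z _ Hh).
  assert (HzT : locally z (fun s => Rbar_lt s T)) by exact (open_Rbar_lt' z T Hz).
  unfold filtermap. generalize (filter_and _ _ Hm HzT). apply filter_imp. intros s [H Hs]. apply H.
  split; [apply Rmax_l | now apply Rbar_lt_Rmax0].
Qed.

Lemma ex_RInt_clamp (u : R) : Rbar_lt 0 T -> Rbar_lt u T -> ex_RInt (fun s => h (Rmax 0 s)) 0 u.
Proof.
  intros HT Hu. apply (ex_RInt_continuous (V := R_CompleteNormedModule)).
  intros z [_ Hz]. apply continuous_clamp; [exact HT|].
  apply (Rbar_le_lt_trans _ (Rmax 0 u)); [exact Hz | now apply Rbar_lt_Rmax0].
Qed.

Lemma RInt_clamp t : 0 <= t -> RInt h 0 t = RInt (fun s => h (Rmax 0 s)) 0 t.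
Proof.
  intros Ht. apply RInt_ext. intros s Hs.
  rewrite Rmin_left, Rmax_right in Hs by lra. now rewrite Rmax_right by lra.
Qed.

Lemma ex_RInt_continuous_in t : inI T t -> ex_RInt h 0 t.
Proof.
  intros [Ht HtT].
  apply (ex_RInt_ext (fun s => h (Rmax 0 s))).
  - intros s Hs. rewrite Rmin_left, Rmax_right in Hs by lra. now rewrite Rmax_right by lra.
  - apply ex_RInt_clamp; [apply (Rbar_le_lt_trans _ t) |]; auto.
Qed.

Lemma derivable_RInt_clamp t : inI T t ->
  derivable_pt_lim (fun u => RInt (fun s => h (Rmax 0 s)) 0 u) t (h t).
Proof.
  intros [Ht HtT]. assert (HT : Rbar_lt 0 T) by (apply (Rbar_le_lt_trans _ t); auto).
  apply is_derive_Reals.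
  replace (h t) with (h (Rmax 0 t)) by (now rewrite Rmax_right).
  apply (is_derive_RInt (V := R_NormedModule) (fun s => h (Rmax 0 s)) _ 0).
  - generalize (open_Rbar_lt' t T HtT). apply filter_imp. intros u Hu.
    apply (RInt_correct (V := R_CompleteNormedModule)), ex_RInt_clamp; auto.
  - apply continuous_clamp; auto.
Qed.
End IntegralOnInterval.

Open Scope C_scope.

Lemma cexp_add z w : cexp (z + w) = cexp z * cexp w.
Proof.
  destruct z as [z1 z2], w as [w1 w2]. unfold cexp, Cplus, Cmult, Re, Im; simpl.
  rewrite exp_plus, cos_plus, sin_plus. f_equal; ring.
Qed.

Lemma cexp_0 : cexp 0 = 1.
Proof. unfold cexp, RtoC, Re, Im; simpl. rewrite exp_0, cos_0, sin_0. f_equal; ring. Qed.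

Lemma cexp_neq0 z : cexp z <> 0.
Proof.
  intros E. apply C1_nz.
  rewrite <- cexp_0, <- (Cplus_opp_r z), cexp_add, E. ring.
Qed.

Lemma cprod_cexp n (c X : nat -> C) :
  cprod n (fun i => c i * cexp (X i)) = cprod n c * cexp (csum n X).
Proof. induction n; simpl; [rewrite cexp_0 | rewrite IHn, cexp_add]; ring. Qed.

Section ContinuityAndIntegrals.
Variable T : Rbar.

Lemma continuous_in_of_deriv_in (f : R -> C) :
  (forall t, inI T t -> exists l, deriv_in T f t l) -> continuous_in T f.
Proof. intros H t Ht. destruct (H t Ht) as [l Hl]. exact (deriv_in_continuous T f t l Hl). Qed.

Lemma continuous_in_Re (f : R -> C) : continuous_in T f -> continuous_in T (fun s => Re (f s)).
Proof. intros H t Ht. exact (lim_Re _ _ (H t Ht)). Qed.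

Lemma continuous_in_Im (f : R -> C) : continuous_in T f -> continuous_in T (fun s => Im (f s)).
Proof. intros H t Ht. exact (lim_Im _ _ (H t Ht)). Qed.

Lemma continuous_in_csum n (fs : nat -> R -> C) :
  (forall i, (i < n)%nat -> continuous_in T (fs i)) ->
  continuous_in T (fun s => csum n (fun i => fs i s)).
Proof.
  induction n as [|n IH]; intros H t Ht; simpl.
  - apply filterlim_const.
  - apply lim_Cplus; [apply IH|apply H]; auto.
Qed.

Lemma CRInt_plus (f g : R -> C) t : continuous_in T f -> continuous_in T g -> inI T t ->
  CRInt (fun s => f s + g s) 0 t = CRInt f 0 t + CRInt g 0 t.
Proof.
  intros Hf Hg Ht. unfold CRInt, Cplus; simpl. f_equal;
    apply (RInt_plus (V := R_CompleteNormedModule)); apply (ex_RInt_continuous_in T); auto;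
    auto using continuous_in_Re, continuous_in_Im.
Qed.

Lemma CRInt_csum n (fs : nat -> R -> C) t :
  (forall i, (i < n)%nat -> continuous_in T (fs i)) -> inI T t ->
  CRInt (fun s => csum n (fun i => fs i s)) 0 t = csum n (fun i => CRInt (fs i) 0 t).
Proof.
  induction n as [|n IH]; intros H Ht; simpl.
  - unfold CRInt; simpl. rewrite !(RInt_const (V := R_CompleteNormedModule)).
    unfold RtoC. f_equal; apply Rmult_0_r.
  - rewrite CRInt_plus, IH; auto using continuous_in_csum.
Qed.
End ContinuityAndIntegrals.

Lemma CRInt_ext (f g : R -> C) a b : (forall s, f s = g s) -> CRInt f a b = CRInt g a b.
Proof. intros H. unfold CRInt. f_equal; apply RInt_ext; intros s _; now rewrite H. Qed.

Definition log_deriv_in (T : Rbar) (f : R -> C) (t : R) (k : C) : Prop :=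
  deriv_in T f t (f t * k).

Section LogDerivative.
Variable T : Rbar.

Lemma log_deriv_in_ext (f g : R -> C) t k : (forall s, inI T s -> f s = g s) -> inI T t ->
  log_deriv_in T f t k -> log_deriv_in T g t k.
Proof. intros Hfg Ht H. unfold log_deriv_in. rewrite <- Hfg by auto. eapply deriv_in_ext; eauto. Qed.

Lemma log_deriv_in_scale (c : C) (f : R -> C) t k :
  log_deriv_in T f t k -> log_deriv_in T (fun s => c * f s) t k.
Proof.
  intros H. unfold log_deriv_in.
  replace (c * f t * k) with (0 * f t + c * (f t * k)) by ring.
  exact (deriv_in_mult T _ _ t _ _ (deriv_in_const T c t) H).
Qed.

Lemma log_deriv_in_mult (f g : R -> C) t k1 k2 :
  log_deriv_in T f t k1 -> log_deriv_in T g t k2 -> log_deriv_in T (fun s => f s * g s) t (k1 + k2).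
Proof.
  intros Hf Hg. unfold log_deriv_in.
  replace (f t * g t * (k1 + k2)) with (f t * k1 * g t + f t * (g t * k2)) by ring.
  exact (deriv_in_mult T _ _ t _ _ Hf Hg).
Qed.

Lemma log_deriv_in_inv (g : R -> C) t k : (forall s, inI T s -> g s <> 0) -> inI T t ->
  log_deriv_in T g t k -> log_deriv_in T (fun s => / g s) t (- k).
Proof.
  intros Hg Ht H. unfold log_deriv_in.
  replace (/ g t * - k) with (- (g t * k / (g t * g t))) by (field; auto).
  exact (deriv_in_inv T g t _ Hg Ht H).
Qed.

Lemma log_deriv_in_cprod n (fs : nat -> R -> C) (ks : nat -> C) t :
  (forall i, (i < n)%nat -> log_deriv_in T (fs i) t (ks i)) ->
  log_deriv_in T (fun s => cprod n (fun i => fs i s)) t (csum n ks).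
Proof.
  induction n as [|n IH]; intros H; simpl.
  - unfold log_deriv_in. rewrite Cmult_0_r. apply deriv_in_const.
  - apply log_deriv_in_mult; auto.
Qed.

Lemma log_deriv_in_cexp_CRInt (c : C) (f : R -> C) t : continuous_in T f -> inI T t ->
  log_deriv_in T (fun s => c * cexp (CRInt f 0 s)) t (f t).
Proof.
  intros Hf Ht. apply log_deriv_in_scale.
  assert (D := deriv_in_cexp T _ _ t _ _
                 (derivable_RInt_clamp T _ (continuous_in_Re T f Hf) t Ht)
                 (derivable_RInt_clamp T _ (continuous_in_Im T f Hf) t Ht)).
  unfold Re, Im in D. rewrite <- surjective_pairing in D.
  apply (log_deriv_in_ext (fun s => cexp (RInt (fun u => Re (f (Rmax 0 u))) 0 s,
                                          RInt (fun u => Im (f (Rmax 0 u))) 0 s))).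
  - intros s [Hs _]. unfold CRInt.
    now rewrite (RInt_clamp (fun u => Re (f u))), (RInt_clamp (fun u => Im (f u))).
  - exact Ht.
  - exact D.
Qed.
End LogDerivative.

Lemma rhsA_miura p (x y : nat -> C) i : (1 <= p)%nat ->
  (forall j, y j = cprod p (fun r => x (j + r)%nat)) ->
  rhsA p x i = x i * (y (S i) - back y i p).
Proof.
  intros Hp Hy. unfold rhsA. f_equal. f_equal.
  - rewrite Hy. apply cprod_ext. intros m _. f_equal. lia.
  - unfold back at 2. destruct (Nat.leb_spec p i).
    + rewrite Hy, <- (cprod_rev p (fun r => x (i - p + r)%nat)). apply cprod_ext. intros m Hm.
      unfold back. destruct (Nat.leb_spec (S m) i); [f_equal|]; lia.
    + apply (cprod_eq0 _ i); [lia|]. unfold back. destruct (Nat.leb_spec (S i) i); [lia|reflexivity].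
Qed.

(* The logarithmic derivative of b_j minus those of a_r, j <= r < j+p-1 (each
   b_{r+1} - b_{r-p}), is that of a_{j+p-1}. *)
Lemma rate_telescope (y : nat -> C) p j : (1 <= p)%nat ->
  csum (S (p - 1)) (fun r => y (j + S r)%nat) - csum (S (p - 1)) (fun r => back y j (S r))
  - csum (p - 1) (fun r => y (S (j + r)) - back y (j + r)%nat p)
  = y (S (j + (p - 1))) - back y (j + (p - 1))%nat p.
Proof.
  intros Hp. destruct p as [|q]; [lia|]. rewrite Nat.sub_succ, Nat.sub_0_r, csum_minus.
  rewrite (csum_ext (S q) (fun r => back y j (S r)) (fun r => back y (j + (S q - 1 - r)) (S q))).
  2:{ intros m Hm. unfold back.
      destruct (Nat.leb_spec (S m) j), (Nat.leb_spec (S q) (j + (S q - 1 - m))); try lia; auto.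
      f_equal. lia. }
  rewrite (csum_rev (S q) (fun r => back y (j + r) (S q))). simpl csum.
  rewrite (csum_ext q (fun r => y (j + S r)%nat) (fun r => y (S (j + r)))) by (intros; f_equal; lia).
  replace (j + S q)%nat with (S (j + q)) by lia. ring.
Qed.

Lemma S2_diff_partial_sum p (y : nat -> C) l : (1 <= l)%nat ->
  S2 p y l (l + p) - S2 p y 1 (p + 1) = csum (l - 1) (fun i => y (S i)).
Proof.
  intros Hl. unfold S2.
  replace (l + p)%nat with (S (l - 1 + p)) by lia. replace (p + 1)%nat with (S (0 + p)) by lia.
  rewrite !mpow_L2_partial_sum, csum_succ_l. simpl. ring.
Qed.

Section Converse.
Variables (p : nat) (T : Rbar) (b : nat -> R -> C) (c : nat -> C) (a : nat -> R -> C).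
Hypothesis p_ge2 : (2 <= p)%nat.
Hypothesis b_sol : solB p T b.
Hypothesis b_neq0 : forall i t, inI T t -> b i t <> 0.
Hypothesis c_neq0 : forall i, (i <= p - 2)%nat -> c i <> 0.
Hypothesis a_init : forall i t, (i <= p - 2)%nat -> inI T t ->
  a i t = c i * cexp (CRInt (b (S i)) 0 t).
Hypothesis a_rec : forall i t, (p - 1 <= i)%nat -> inI T t ->
  a i t = b (i - (p - 1))%nat t / cprod (p - 1) (fun j => a (i - (p - 1) + j)%nat t).

Lemma b_continuous i : continuous_in T (b i).
Proof. apply continuous_in_of_deriv_in. intros t Ht. eexists. now apply b_sol. Qed.

Lemma a_neq0 i t : inI T t -> a i t <> 0.
Proof.
  revert t; induction i as [i IH] using (well_founded_induction Wf_nat.lt_wf); intros t Ht.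
  destruct (Nat.le_gt_cases i (p - 2)).
  - rewrite a_init by auto. apply Cmult_neq_0; auto using cexp_neq0.
  - rewrite a_rec by (auto; lia). apply Cmult_neq_0; [auto|].
    apply Cinv_neq0, cprod_neq0. intros m Hm. apply IH; [lia | exact Ht].
Qed.

Lemma b_miura t : inI T t -> forall j, b j t = cprod p (fun r => a (j + r)%nat t).
Proof.
  intros Ht j. replace p with (S (p - 1)) at 1 by lia. simpl.
  rewrite (a_rec (j + (p - 1))) by (auto; lia).
  replace (j + (p - 1) - (p - 1))%nat with j by lia.
  field. apply cprod_neq0. intros m _. now apply a_neq0.
Qed.

Lemma a_log_deriv i t : inI T t -> log_deriv_in T (a i) t (b (S i) t - back (fun n => b n t) i p).
Proof.
  revert t; induction i as [i IH] using (well_founded_induction Wf_nat.lt_wf); intros t Ht.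
  destruct (Nat.le_gt_cases i (p - 2)).
  - unfold back. destruct (Nat.leb_spec p i); [lia|]. replace (b (S i) t - 0) with (b (S i) t) by ring.
    apply (log_deriv_in_ext T (fun s => c i * cexp (CRInt (b (S i)) 0 s))); [|exact Ht|].
    + intros s Hs. symmetry. now apply a_init.
    + exact (log_deriv_in_cexp_CRInt T (c i) (b (S i)) t (b_continuous (S i)) Ht).
  - destruct (Nat.le_exists_sub (p - 1) i) as [j [-> _]]; [lia|].
    rewrite <- (rate_telescope (fun n => b n t) p j) by lia.
    apply (log_deriv_in_ext T (fun s => b j s * / cprod (p - 1) (fun r => a (j + r)%nat s))).
    + intros s Hs. rewrite (a_rec _ s), Nat.add_sub by (lia || exact Hs). reflexivity.
    + exact Ht.
    + apply log_deriv_in_mult.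
      * unfold log_deriv_in. rewrite <- !sum_n_csum. now apply b_sol.
      * apply log_deriv_in_inv; [| exact Ht |].
        -- intros s Hs. apply cprod_neq0. intros m _. now apply a_neq0.
        -- apply log_deriv_in_cprod. intros r Hr. apply IH; [lia | exact Ht].
Qed.

Lemma a_sol : solA p T a.
Proof.
  intros i t Ht.
  rewrite (rhsA_miura p (fun n => a n t) (fun n => b n t) i) by (lia || exact (b_miura t Ht)).
  exact (a_log_deriv i t Ht).
Qed.

Lemma S1_one_eq_S2_one t k : inI T t -> S1 p (fun i => a i t) 1 k = S2 p (fun i => b i t) 1 k.
Proof. intros Ht. rewrite (S1_eq_cprod_S2 p _ _ ltac:(lia) (b_miura t Ht)). simpl. ring. Qed.

Lemma cprod_a_eq_exp_integral l t : (l <= p)%nat -> inI T t ->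
  cprod (l - 1) (fun i => a i t) = cprod (l - 1) c * cexp (CRInt (fun s => csum (l - 1) (fun i => b (S i) s)) 0 t).
Proof.
  intros Hl Ht. rewrite (CRInt_csum T) by auto using b_continuous.
  rewrite <- cprod_cexp. apply cprod_ext. intros m Hm. apply a_init; [lia | exact Ht].
Qed.

Lemma S1_eq_exp_integral_S2 l k t : (2 <= l <= p)%nat -> inI T t ->
  S1 p (fun i => a i t) l k =
  cprod (l - 1) c
  * cexp (CRInt (fun s => S2 p (fun i => b i s) l (l + p) - S2 p (fun i => b i s) 1 (p + 1)) 0 t)
  * S2 p (fun i => b i t) l k.
Proof.
  intros Hl Ht.
  rewrite (CRInt_ext _ (fun s => csum (l - 1) (fun i => b (S i) s)))
    by (intros; apply S2_diff_partial_sum; lia).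
  rewrite (S1_eq_cprod_S2 p _ _ ltac:(lia) (b_miura t Ht)), cprod_a_eq_exp_integral by (lia || exact Ht).
  reflexivity.
Qed.
End Converse.

Close Scope C_scope.

Theorem theorem3 (p : nat) (T : Rbar) :
  (2 <= p)%nat -> Rbar_lt 0 T ->
  (* direct part *)
  (forall a : nat -> R -> C,
     solA p T a ->
     (forall i t, inI T t -> a i t <> RtoC 0) ->
     (forall t, inI T t -> bounded_seq (fun i => a i t)) ->
     forall t, inI T t -> forall l k : nat, (1 <= l <= p)%nat ->
       Cdiv (S1 p (fun i => a i t) l k) (S1 p (fun i => a i t) l (l - 1))
       = S2 p (fun i => miura p a i t) l k)
  /\
  (* converse part *)
  (forall (b : nat -> R -> C) (c : nat -> C) (a : nat -> R -> C),
     solB p T b ->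
     (forall i t, inI T t -> b i t <> RtoC 0) ->
     (forall t, inI T t -> bounded_seq (fun i => b i t)) ->
     (forall i, (i <= p - 2)%nat -> c i <> RtoC 0) ->
     (forall i t, (i <= p - 2)%nat -> inI T t ->
        a i t = Cmult (c i) (cexp (CRInt (b (S i)) 0 t))) ->
     (forall i t, (p - 1 <= i)%nat -> inI T t ->
        a i t = Cdiv (b (i - (p - 1))%nat t)
                     (cprod (p - 1) (fun j => a (i - (p - 1) + j)%nat t))) ->
     (forall t, inI T t -> forall k : nat,
        S1 p (fun i => a i t) 1 k = S2 p (fun i => b i t) 1 k) /\
     (forall t, inI T t -> forall l k : nat, (2 <= l <= p)%nat ->
        S1 p (fun i => a i t) l k =
        Cmult (Cmult (cprod (l - 1) c)
                     (cexp (CRInt (fun s => Cminus (S2 p (fun i => b i s) l (l + p))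
                                                  (S2 p (fun i => b i s) 1 (p + 1))) 0 t)))
              (S2 p (fun i => b i t) l k)) /\
     solA p T a).
Proof.
  intros Hp _. split.
  - intros a _ Ha _ t Ht l k _. apply S1_ratio; [lia|]. intros m. exact (Ha m t Ht).
  - intros b c a Hb Hb0 _ Hc Ha1 Ha2. split; [|split].
    + intros t Ht k. apply (S1_one_eq_S2_one p T b c a); auto.
    + intros t Ht l k Hl. apply (S1_eq_exp_integral_S2 p T b c a); auto.
    + apply (a_sol p T b c a); auto.
Qed.
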